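(* Let $S=\{a+b\sqrt2 : a,b\in\mathbb Z_{\ge0},\ (a,b)\neq(0,0)\}$, a semiring (closed under addition and multiplication). Then: (i) the only invertible element of $S$ is $1$; (ii) $7(5+2\sqrt2)=(3+8\sqrt2)(1+2\sqrt2)$, and the four elements $7$, $5+2\sqrt2$, $3+8\sqrt2$, $1+2\sqrt2$ are all prime (irreducible) in $S$; (iii) Pythagorean proportionality in $S$ is not transitive; (iv) $7(5+2\sqrt2)$ and $7(1+2\sqrt2)$ have no algebraic gcd in $S$.
   Context: In the multiplicative monoid $S$, $u$ divides $w$ if $w=uz$ for some $z\in S$; a non-unit element is prime (irreducible) if its only divisors in $S$ are $1$ and itself. Pythagorean proportionality in $S$: $a:b=c:d$ if there exist $x,y,m,n\in S$ with $a=mx$, $b=nx$, $c=my$, $d=ny$. An algebraic gcd of $a,b\in S$ is a common divisor of $a$ and $b$ in $S$ that is divisible (in $S$) by every common divisor of $a$ and $b$ in $S$. *)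

(* An element a + b*sqrt 2 of S is represented by the pair
   (a, b) of natural numbers; since sqrt 2 is irrational this representation
   is unique, so equality of elements is equality of pairs. *)
From Stdlib Require Import Arith.

Definition elt := (nat * nat)%type.

Definition inS (x : elt) : Prop := x <> (0, 0).

(* (a + b sqrt2)(c + d sqrt2) = (ac + 2bd) + (ad + bc) sqrt2 *)
Definition mulS (x y : elt) : elt :=
  (fst x * fst y + 2 * (snd x * snd y), fst x * snd y + snd x * fst y).

Definition oneS : elt := (1, 0).

Definition dividesS (u w : elt) : Prop := exists z, inS z /\ w = mulS u z.

Definition unitS (u : elt) : Prop := exists v, inS v /\ mulS u v = oneS.

Definition primeS (p : elt) : Prop :=
  inS p /\ ~ unitS p /\
  forall d, inS d -> dividesS d p -> d = oneS \/ d = p.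

Definition propS (a b c d : elt) : Prop :=
  exists x y m n, inS x /\ inS y /\ inS m /\ inS n /\
    a = mulS m x /\ b = mulS n x /\ c = mulS m y /\ d = mulS n y.

Definition gcdS (g a b : elt) : Prop :=
  inS g /\ dividesS g a /\ dividesS g b /\
  forall c, inS c -> dividesS c a -> dividesS c b -> dividesS c g.

(* Elements of S are pairs (a, b) of naturals, so every factor of w = (a, b)
   has both coordinates bounded by a + b; primality of the four given elements is
   therefore a finite search, decided by computation.  Since 7 is prime, a
   proportion 7 : (1+2√2) = c : d forces c or (1+2√2) to be a multiple of 7,
   which breaks transitivity through 7(5+2√2) : (5+2√2)(1+2√2).  Finally a gcd
   of 7(5+2√2) = (3+8√2)(1+2√2) and 7(1+2√2) is divisible by 7 and divides
   7(1+2√2), so it is 7 or 7(1+2√2) by primality of 1+2√2; but 1+2√2 does not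
   divide 7, and 7(1+2√2) does not divide 7(5+2√2). *)
From Stdlib Require Import Arith Lia List Bool.

Lemma mulS_comm (x y : elt) : mulS x y = mulS y x.
Proof.
  destruct x as [a b], y as [c d]; unfold mulS; simpl; f_equal; ring.
Qed.

Lemma mulS_assoc (x y z : elt) : mulS x (mulS y z) = mulS (mulS x y) z.
Proof.
  destruct x as [a b], y as [c d], z as [e f]; unfold mulS; simpl; f_equal; ring.
Qed.

Lemma mulS_1l (x : elt) : mulS oneS x = x.
Proof. destruct x as [a b]; unfold mulS, oneS; simpl; f_equal; lia. Qed.

Lemma mulS_natl (k : nat) (x : elt) : mulS (k, 0) x = (k * fst x, k * snd x).
Proof. destruct x as [a b]; unfold mulS; simpl; f_equal; lia. Qed.

Lemma mulS_natl_inj (k : nat) (x y : elt) :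
  k <> 0 -> mulS (k, 0) x = mulS (k, 0) y -> x = y.
Proof.
  intros Hk E; rewrite !mulS_natl in E; injection E; intros E2 E1.
  apply Nat.mul_cancel_l in E1, E2; auto.
  destruct x, y; simpl in *; congruence.
Qed.

Lemma unitS_one (u : elt) : unitS u -> u = oneS.
Proof.
  intros [[c d] [_ E]]; destruct u as [a b]; unfold mulS, oneS in E; simpl in E.
  injection E; intros E2 E1.
  assert (a * c = 1) as Hac by lia; apply Nat.mul_eq_1 in Hac as [-> ->].
  unfold oneS; f_equal; lia.
Qed.

Lemma factor_le (u z w : elt) : inS z -> w = mulS u z ->
  fst u <= fst w + snd w /\ snd u <= fst w + snd w.
Proof.
  destruct u as [a b], z as [c d]; unfold inS, mulS; simpl; intros Hz ->; simpl.
  destruct c, d; [congruence | nia | nia | nia].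
Qed.

Definition elt_eqb (x y : elt) : bool := (fst x =? fst y) && (snd x =? snd y).

Lemma elt_eqb_spec (x y : elt) : elt_eqb x y = true <-> x = y.
Proof.
  destruct x as [a b], y as [c d]; unfold elt_eqb; simpl.
  rewrite andb_true_iff, !Nat.eqb_eq; split.
  - intros [-> ->]; reflexivity.
  - intros E; injection E; auto.
Qed.

Definition inSb (x : elt) : bool := negb (elt_eqb x (0, 0)).

Lemma inSb_spec (x : elt) : inSb x = true <-> inS x.
Proof.
  unfold inSb, inS; rewrite negb_true_iff, <- not_true_iff_false, elt_eqb_spec.
  reflexivity.
Qed.

Definition box (N : nat) : list elt := list_prod (seq 0 (S N)) (seq 0 (S N)).

Lemma in_box (N : nat) (x : elt) : fst x <= N -> snd x <= N -> In x (box N).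
Proof.
  destruct x as [a b]; intros Ha Hb; apply in_prod; apply in_seq; simpl in *; lia.
Qed.

Definition trivial_factorsb (w : elt) : bool :=
  let B := box (fst w + snd w) in
  forallb (fun d => forallb (fun z =>
    implb (inSb d && inSb z && elt_eqb w (mulS d z))
          (elt_eqb d oneS || elt_eqb d w)) B) B.

Lemma trivial_factorsb_primeS (p : elt) :
  inS p -> p <> oneS -> trivial_factorsb p = true -> primeS p.
Proof.
  intros Hp Hp1 Hb; split; [exact Hp | split].
  - intros U; exact (Hp1 (unitS_one p U)).
  - intros d Hd [z [Hz E]].
    assert (Ez : p = mulS z d) by (rewrite mulS_comm; exact E).
    destruct (factor_le d z p Hz E) as [Hd1 Hd2].
    destruct (factor_le z d p Hd Ez) as [Hz1 Hz2].
    unfold trivial_factorsb in Hb; rewrite forallb_forall in Hb.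
    specialize (Hb d (in_box _ _ Hd1 Hd2)); rewrite forallb_forall in Hb.
    specialize (Hb z (in_box _ _ Hz1 Hz2)).
    apply inSb_spec in Hd; apply inSb_spec in Hz; apply elt_eqb_spec in E.
    rewrite Hd, Hz, E in Hb; simpl in Hb.
    apply orb_true_iff in Hb as [H | H]; apply elt_eqb_spec in H; auto.
Qed.

Ltac prime_by_search :=
  apply trivial_factorsb_primeS;
  [ unfold inS; discriminate | unfold oneS; discriminate | vm_compute; reflexivity ].

Lemma primeS_7 : primeS (7, 0).
Proof. prime_by_search. Qed.

Lemma primeS_5_2 : primeS (5, 2).
Proof. prime_by_search. Qed.

Lemma primeS_3_8 : primeS (3, 8).
Proof. prime_by_search. Qed.

Lemma primeS_1_2 : primeS (1, 2).
Proof. prime_by_search. Qed.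

Lemma propS_7_35 : propS (7, 0) (1, 2) (35, 14) (13, 12).
Proof.
  exists (1, 0), (5, 2), (7, 0), (1, 2); unfold inS; repeat split; discriminate.
Qed.

Lemma propS_35_3 : propS (35, 14) (13, 12) (3, 8) (5, 2).
Proof.
  exists (1, 2), (1, 0), (3, 8), (5, 2); unfold inS; repeat split; discriminate.
Qed.

Lemma not_propS_7_3 : ~ propS (7, 0) (1, 2) (3, 8) (5, 2).
Proof.
  intros (x & y & m & n & Hx & Hy & Hm & Hn & Ea & Eb & Ec & Ed).
  destruct primeS_7 as (_ & _ & Hdiv).
  destruct (Hdiv m Hm (ex_intro _ x (conj Hx Ea))) as [-> | ->].
  - rewrite mulS_1l in Ea; subst x.
    rewrite mulS_comm, mulS_natl in Eb; injection Eb; lia.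
  - rewrite mulS_natl in Ec; injection Ec; lia.
Qed.

Lemma no_gcdS_35_7 : ~ exists g, gcdS g (mulS (7, 0) (5, 2)) (mulS (7, 0) (1, 2)).
Proof.
  intros (g & Hg & Hg1 & Hg2 & Hmax).
  assert (H7 : dividesS (7, 0) g).
  { apply Hmax; [unfold inS; discriminate | exists (5, 2) | exists (1, 2)];
      split; try reflexivity; unfold inS; discriminate. }
  assert (H12 : dividesS (1, 2) g).
  { apply Hmax; [unfold inS; discriminate | exists (3, 8) | exists (7, 0)];
      split; try reflexivity; unfold inS; discriminate. }
  destruct H7 as (h & Hh & ->).
  assert (Hh12 : dividesS h (1, 2)).
  { destruct Hg2 as (z & Hz & E); exists z; split; [exact Hz |].
    rewrite <- mulS_assoc in E; exact (mulS_natl_inj 7 _ _ ltac:(discriminate) E). }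
  destruct primeS_1_2 as (_ & _ & Hdiv).
  destruct (Hdiv h Hh Hh12) as [-> | ->].
  - destruct H12 as ([z1 z2] & Hz & E); unfold inS in Hz; unfold mulS in E; simpl in E.
    injection E; intros; destruct z1, z2; [congruence | lia | lia | lia].
  - destruct Hg1 as ([z1 z2] & _ & E); unfold mulS in E; simpl in E.
    injection E; lia.
Qed.

Theorem mainTheorem14 :
  (* (i) the only invertible element of S is 1 *)
  (unitS oneS /\ forall u, inS u -> unitS u -> u = oneS) /\
  (* (ii) 7(5+2√2) = (3+8√2)(1+2√2), and the four factors are prime *)
  (mulS (7, 0) (5, 2) = mulS (3, 8) (1, 2) /\
   primeS (7, 0) /\ primeS (5, 2) /\ primeS (3, 8) /\ primeS (1, 2)) /\
  (* (iii) Pythagorean proportionality is not transitive *)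
  ~ (forall a b c d e f, inS a -> inS b -> inS c -> inS d -> inS e -> inS f ->
       propS a b c d -> propS c d e f -> propS a b e f) /\
  (* (iv) 7(5+2√2) and 7(1+2√2) have no algebraic gcd in S *)
  ~ (exists g, gcdS g (mulS (7, 0) (5, 2)) (mulS (7, 0) (1, 2))).
Proof.
  split; [| split; [| split]].
  - split.
    + exists oneS; split; [unfold inS, oneS; discriminate | reflexivity].
    + intros u _; exact (unitS_one u).
  - exact (conj eq_refl (conj primeS_7 (conj primeS_5_2 (conj primeS_3_8 primeS_1_2)))).
  - intros Htrans; apply not_propS_7_3.
    apply (Htrans _ _ (35, 14) (13, 12)); try (unfold inS; discriminate).
    + exact propS_7_35.
    + exact propS_35_3.
  - exact no_gcdS_35_7.
Qed.
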